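(* Let $\Gamma$ be a maximal consistent set of SBTrust and let $\delta,\psi$ be propositional formulas. Then $\delta\rightsquigarrow\psi\in\Gamma$ if and only if $\psi\in\Delta$ for every $(\Delta,\varphi,i)\in\mathit{max}([\delta]_\Gamma)$.
   Context: $\mathcal{L}_T$: $\alpha::=\varphi\mid\varphi\rightsquigarrow\varphi\mid B(\alpha)\mid\alpha*\alpha\mid\neg\alpha$, with $\varphi$ ranging over classical propositional formulas (set $\mathcal{L}_{CL}$) and $*\in\{\land,\lor,\to,\leftrightarrow\}$. SBTrust is the Hilbert system ($\varphi,\psi,\chi,\varphi_i,\psi_i$ propositional; $\alpha,\beta\in\mathcal{L}_T$; rule outputs in $\mathcal{L}_T$): classical tautologies and Modus Ponens; $\varphi\rightsquigarrow\varphi$; $(\varphi\rightsquigarrow\bot)\to\neg\varphi$; $((\psi\land\chi)\rightsquigarrow\varphi)\to(\psi\rightsquigarrow(\chi\to\varphi))$; $(\neg(\varphi\leftrightarrow\psi)\rightsquigarrow\bot)\to((\varphi\rightsquigarrow\chi)\leftrightarrow(\psi\rightsquigarrow\chi))$; rule RCK: from $(\varphi_1\land\dots\land\varphi_n)\to\varphi_{n+1}$ infer $\bigwedge_{j\le n}(\psi\rightsquigarrow\varphi_j)\to(\psi\rightsquigarrow\varphi_{n+1})$; rule $\mathbf{S5_F}$: from $(\ell_1\land\dots\land\ell_n)\to\chi$ infer $(\ell_1\land\dots\land\ell_n)\to(\neg\chi\rightsquigarrow\bot)$, each $\ell_j$ being $\varphi_j\rightsquigarrow\psi_j$ or its negation,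 $\chi$ propositional; $B(\alpha\to\beta)\to(B\alpha\to B\beta)$; $B\alpha\to\neg B\neg\alpha$; $B\alpha\to BB\alpha$; necessitation for $B$. A maximal consistent set (MCS) is $\Gamma\subseteq\mathcal{L}_T$ with $\Gamma\nvdash\bot$ and, for each $\alpha$, $\alpha\in\Gamma$ or $\neg\alpha\in\Gamma$. For MCSs, $\Gamma\leftrightsquigarrow\Delta$ iff they contain the same formulas of the form $\chi\rightsquigarrow\psi$; $[\Gamma]_\leftrightsquigarrow$ is the equivalence class. $\rightsquigarrow_\varphi(\Gamma)=\{\psi:\varphi\rightsquigarrow\psi\in\Gamma\}$, and $\Delta$ is $\varphi$-likely for $\Gamma$ if $\rightsquigarrow_\varphi(\Gamma)\subseteq\Delta$. Let $S_\Gamma=[\Gamma]_\leftrightsquigarrow\times\mathcal{L}_{CL}\times\{0,1,2\}$ and $[\delta]_\Gamma=\{(\Delta,\varphi,i)\in S_\Gamma:\delta\in\Delta\}$. Define $\succeq_\Gamma\subseteq S_\Gamma\times S_\Gamma$ by: $(\Delta,\varphi,i)\succeq_\Gamma(\Omega,\psi,j)$ iff ($\Delta$ is $\varphi$-likely for $\Gamma$ and $\varphi\in\Omega$) or ($i=1,j=0$) or ($i=2,j=1$) or ($i=0,j=2$). For $X\subseteq S_\Gamma$, $\mathit{max}(X)=\{x\in X:\forall y\in X\,(y\succeq_\Gamma x\Rightarrow x\succeq_\Gamma y)\}$. *)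

From Stdlib Require Import List Bool.
Import ListNotations.

Inductive pform : Type :=
| PVar : nat -> pform
| PBot : pform
| PNeg : pform -> pform
| PAnd : pform -> pform -> pform
| POr  : pform -> pform -> pform
| PImp : pform -> pform -> pform
| PIff : pform -> pform -> pform.

Definition PTop : pform := PNeg PBot.

Inductive tform : Type :=
| TProp : pform -> tform
| TCond : pform -> pform -> tform
| TB    : tform -> tform
| TNeg  : tform -> tform
| TAnd  : tform -> tform -> tform
| TOr   : tform -> tform -> tform
| TImp  : tform -> tform -> tform
| TIff  : tform -> tform -> tform.

Definition TBot : tform := TProp PBot.

Fixpoint peval (v : nat -> bool) (p : pform) : bool :=
  match p with
  | PVar n => v n
  | PBot => false
  | PNeg a => negb (peval v a)
  | PAnd a b => peval v a && peval v b
  | POr a b => peval v a || peval v b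
  | PImp a b => implb (peval v a) (peval v b)
  | PIff a b => eqb (peval v a) (peval v b)
  end.

Fixpoint teval (v : nat -> bool) (w : tform -> bool) (a : tform) : bool :=
  match a with
  | TProp p => peval v p
  | TCond _ _ => w a
  | TB _ => w a
  | TNeg x => negb (teval v w x)
  | TAnd x y => teval v w x && teval v w y
  | TOr x y => teval v w x || teval v w y
  | TImp x y => implb (teval v w x) (teval v w y)
  | TIff x y => eqb (teval v w x) (teval v w y)
  end.

(** Instances (in L_T) of classical tautologies. *)
Definition tautology (a : tform) : Prop :=
  forall v w, teval v w a = true.

Fixpoint pbigand (l : list pform) : pform :=
  match l with
  | [] => PTop
  | [p] => p
  | p :: l' => PAnd p (pbigand l')
  end.

Fixpoint tbigand (l : list tform) : tform :=
  match l with
  | [] => TProp PTop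
  | [a] => a
  | a :: l' => TAnd a (tbigand l')
  end.

Definition lit_form (l : bool * pform * pform) : tform :=
  match l with
  | (true, p, q) => TCond p q
  | (false, p, q) => TNeg (TCond p q)
  end.

Inductive thm : tform -> Prop :=
| ax_taut : forall a, tautology a -> thm a
| rule_mp : forall a b, thm (TImp a b) -> thm a -> thm b
| ax_id : forall p, thm (TCond p p)
| ax_bot : forall p, thm (TImp (TCond p PBot) (TProp (PNeg p)))
| ax_exp : forall p q r,
    thm (TImp (TCond (PAnd q r) p) (TCond q (PImp r p)))
| ax_lle : forall p q r,
    thm (TImp (TCond (PNeg (PIff p q)) PBot)
              (TIff (TCond p r) (TCond q r)))
| rule_rck : forall (l : list pform) (p q : pform),
    thm (TProp (PImp (pbigand l) p)) ->
    thm (TImp (tbigand (map (fun x => TCond q x) l)) (TCond q p))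
| rule_s5f : forall (ls : list (bool * pform * pform)) (chi : pform),
    thm (TImp (tbigand (map lit_form ls)) (TProp chi)) ->
    thm (TImp (tbigand (map lit_form ls)) (TCond (PNeg chi) PBot))
| ax_K : forall a b, thm (TImp (TB (TImp a b)) (TImp (TB a) (TB b)))
| ax_D : forall a, thm (TImp (TB a) (TNeg (TB (TNeg a))))
| ax_4 : forall a, thm (TImp (TB a) (TB (TB a)))
| rule_nec : forall a, thm a -> thm (TB a).

Fixpoint imps (l : list tform) (a : tform) : tform :=
  match l with
  | [] => a
  | b :: l' => TImp b (imps l' a)
  end.

(** Derivability from a set of premises (rules apply to theorems only). *)
Definition derives (G : tform -> Prop) (a : tform) : Prop :=
  exists l : list tform, (forall b, In b l -> G b) /\ thm (imps l a).

Definition MCS (G : tform -> Prop) : Prop :=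
  ~ derives G TBot /\ forall a, G a \/ G (TNeg a).

Definition same_cond (G D : tform -> Prop) : Prop :=
  forall p q, G (TCond p q) <-> D (TCond p q).

Definition likely (G : tform -> Prop) (p : pform) (D : tform -> Prop) : Prop :=
  forall q, G (TCond p q) -> D (TProp q).

Inductive idx3 : Type := I0 | I1 | I2.

Definition sel : Type := ((tform -> Prop) * pform * idx3)%type.

Definition in_S (G : tform -> Prop) (x : sel) : Prop :=
  let '(D, _, _) := x in MCS D /\ same_cond G D.

Definition in_box (G : tform -> Prop) (d : pform) (x : sel) : Prop :=
  in_S G x /\ (let '(D, _, _) := x in D (TProp d)).

Definition succeq (G : tform -> Prop) (x y : sel) : Prop :=
  let '(D, p, i) := x in
  let '(W, _, j) := y in
  (likely G p D /\ W (TProp p))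
  \/ (i = I1 /\ j = I0) \/ (i = I2 /\ j = I1) \/ (i = I0 /\ j = I2).

Definition in_max (G : tform -> Prop) (X : sel -> Prop) (x : sel) : Prop :=
  X x /\ forall y, X y -> succeq G y x -> succeq G x y.

(* A maximal triple (Δ, φ, i) of [δ]_Γ has to dominate (W, φ, i+1) for every W
   of [δ]_Γ, and only the first clause of ≽ can give that; so Δ is φ-likely and
   φ holds in every member of [Γ] containing δ.  By compactness and rule S5_F
   the latter yields ¬(δ ↔ φ ∧ δ) ⇝ ⊥ ∈ Γ, whence, by LLE and exportation,
   δ ⇝ ψ ∈ Γ gives φ ⇝ (δ → ψ) ∈ Γ and so ψ ∈ Δ.
   Conversely, every δ-likely Δ of [Γ] with δ ∈ Δ gives a maximal triple
   (Δ, δ, 0).  If ψ lies in all such Δ, compactness provides finitely many r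
   with δ ⇝ r ∈ Γ such that χ := ⋀r → (δ → ψ) holds throughout [Γ]; then S5_F
   and LLE give δ ⇝ χ ∈ Γ, and RCK gives δ ⇝ ψ ∈ Γ. *)

From Stdlib Require Import List Bool Classical Cantor Lia.
Import ListNotations.

Lemma teval_imps v w l a :
  teval v w (imps l a) = true <->
  ((forall x, In x l -> teval v w x = true) -> teval v w a = true).
Proof.
  induction l as [|b l IH]; simpl.
  - firstorder.
  - destruct (teval v w b) eqn:Eb; simpl; rewrite ?IH; split.
    + intros H Hl. apply H. intros x Hx. apply Hl. now right.
    + intros H Hl. apply H. intros x [<-|Hx]; auto.
    + intros _ Hl. rewrite (Hl b (or_introl eq_refl)) in Eb. discriminate.
    + reflexivity.
Qed.

Lemma teval_tbigand v w l :
  teval v w (tbigand l) = true <-> (forall x, In x l -> teval v w x = true).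
Proof.
  induction l as [|a [|b l] IH].
  - simpl. firstorder.
  - simpl. firstorder congruence.
  - change (teval v w a && teval v w (tbigand (b :: l)) = true <->
      (forall x, In x (a :: b :: l) -> teval v w x = true)).
    rewrite andb_true_iff, IH. firstorder congruence.
Qed.

Lemma peval_pbigand v l :
  peval v (pbigand l) = true <-> (forall x, In x l -> peval v x = true).
Proof.
  induction l as [|a [|b l] IH].
  - simpl. firstorder.
  - simpl. firstorder congruence.
  - change (peval v a && peval v (pbigand (b :: l)) = true <->
      (forall x, In x (a :: b :: l) -> peval v x = true)).
    rewrite andb_true_iff, IH. firstorder congruence.
Qed.

Ltac tautology_by_cases :=
  let v := fresh "v" in
  let w := fresh "w" in
  intros v w; simpl;
  repeat match goal with
         | |- context [peval v ?p] => destruct (peval v p)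
         | |- context [teval v w ?a] => destruct (teval v w a)
         | |- context [w ?a] => destruct (w a)
         end;
  reflexivity.

Lemma thm_taut_consequence ts a :
  (forall t, In t ts -> thm t) ->
  (forall v w, (forall t, In t ts -> teval v w t = true) -> teval v w a = true) ->
  thm a.
Proof.
  intros Hts Hsem.
  assert (Himp : thm (imps ts a)) by (apply ax_taut; intros v w; apply teval_imps, Hsem).
  clear Hsem. induction ts as [|t ts IH]; simpl in *; auto.
  apply IH; eauto using rule_mp.
Qed.

Lemma derives_mono X Y a : (forall x, X x -> Y x) -> derives X a -> derives Y a.
Proof. intros HXY [l [Hl Ha]]. exists l. auto. Qed.

Lemma derives_combine X a b c :
  derives X a -> derives X b -> tautology (TImp a (TImp b c)) -> derives X c.
Proof.
  intros [la [Hla Ha]] [lb [Hlb Hb]] Hc. exists (la ++ lb). split.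
  - intros x Hx. apply in_app_or in Hx as [Hx|Hx]; auto.
  - apply (thm_taut_consequence [imps la a; imps lb b; TImp a (TImp b c)]).
    + intros t [<-|[<-|[<-|[]]]]; auto using ax_taut.
    + intros v w Ht. apply teval_imps. intros Hl.
      pose proof (Ht _ (or_introl eq_refl)) as Ea.
      pose proof (Ht _ (or_intror (or_introl eq_refl))) as Eb.
      pose proof (Ht _ (or_intror (or_intror (or_introl eq_refl)))) as Ec.
      rewrite teval_imps in Ea, Eb. simpl in Ec.
      rewrite Ea, Eb in Ec; auto using in_or_app.
Qed.

Definition tform_eq_dec (a b : tform) : {a = b} + {a <> b}.
Proof. repeat decide equality. Defined.

Lemma deduction X a b : derives (fun y => y = a \/ X y) b -> derives X (TImp a b).
Proof.
  intros [l [Hl Hb]]. exists (remove tform_eq_dec a l). split.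
  - intros x Hx. apply in_remove in Hx as [Hx Hxa]. now destruct (Hl x Hx).
  - apply (thm_taut_consequence [imps l b]); [intros t [<-|[]]; auto|].
    intros v w Ht. specialize (Ht _ (or_introl eq_refl)). rewrite teval_imps in Ht.
    apply teval_imps. intros Hrem. simpl.
    destruct (teval v w a) eqn:Ea; simpl; auto.
    apply Ht. intros x Hx. destruct (tform_eq_dec x a) as [->|Hxa]; auto.
    apply Hrem, in_in_remove; auto.
Qed.

Lemma derives_image {I} (f : I -> tform) (P : I -> Prop) X c :
  derives (fun b => X b \/ exists i, P i /\ b = f i) c ->
  exists is, (forall i, In i is -> P i) /\ derives X (imps (map f is) c).
Proof.
  intros [l [Hl Hc]].
  assert (Hsplit : exists lX is, (forall b, In b lX -> X b) /\ (forall i, In i is -> P i) /\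
            forall b, In b l -> In b lX \/ In b (map f is)).
  { clear Hc. induction l as [|b l IH].
    - exists [], []. simpl. tauto.
    - destruct IH as (lX & is & HlX & His & Hincl); [intros; apply Hl; now right|].
      destruct (Hl b (or_introl eq_refl)) as [Hb|(i & Hi & ->)].
      + exists (b :: lX), is. simpl. firstorder congruence.
      + exists lX, (i :: is). simpl. firstorder congruence. }
  destruct Hsplit as (lX & is & HlX & His & Hincl).
  exists is. split; auto. exists lX. split; auto.
  apply (thm_taut_consequence [imps l c]); [intros t [<-|[]]; auto|].
  intros v w Ht. specialize (Ht _ (or_introl eq_refl)). rewrite teval_imps in Ht.
  apply teval_imps. intros HX. apply teval_imps. intros Hf.
  apply Ht. intros b Hb. destruct (Hincl b Hb); auto.
Qed.

Definition consistent (X : tform -> Prop) : Prop := ~ derives X TBot.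

Lemma consistent_mono X Y : (forall x, X x -> Y x) -> consistent Y -> consistent X.
Proof. intros HXY HY HX. apply HY. eapply derives_mono; eauto. Qed.

Lemma consistent_add_or_add_neg X a :
  consistent X ->
  consistent (fun y => y = a \/ X y) \/ consistent (fun y => y = TNeg a \/ X y).
Proof.
  intros HX. destruct (classic (consistent (fun y => y = a \/ X y))) as [Ha|Ha]; auto.
  right. intros Hna. apply NNPP in Ha. apply HX.
  apply (derives_combine X (TImp a TBot) (TImp (TNeg a) TBot)); auto using deduction.
  tautology_by_cases.
Qed.

Fixpoint pcode (p : pform) : nat :=
  match p with
  | PVar n => to_nat (0, n)
  | PBot => to_nat (1, 0)
  | PNeg a => to_nat (2, pcode a)
  | PAnd a b => to_nat (3, to_nat (pcode a, pcode b))
  | POr a b => to_nat (4, to_nat (pcode a, pcode b))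
  | PImp a b => to_nat (5, to_nat (pcode a, pcode b))
  | PIff a b => to_nat (6, to_nat (pcode a, pcode b))
  end.

Fixpoint tcode (a : tform) : nat :=
  match a with
  | TProp p => to_nat (0, pcode p)
  | TCond p q => to_nat (1, to_nat (pcode p, pcode q))
  | TB a => to_nat (2, tcode a)
  | TNeg a => to_nat (3, tcode a)
  | TAnd a b => to_nat (4, to_nat (tcode a, tcode b))
  | TOr a b => to_nat (5, to_nat (tcode a, tcode b))
  | TImp a b => to_nat (6, to_nat (tcode a, tcode b))
  | TIff a b => to_nat (7, to_nat (tcode a, tcode b))
  end.

Ltac split_codes H :=
  apply to_nat_inj in H; try discriminate; apply (f_equal snd) in H; cbn [snd] in H;
  try (apply to_nat_inj in H;
       pose proof (f_equal fst H); pose proof (f_equal snd H); cbn [fst snd] in * ).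

Lemma pcode_inj p p' : pcode p = pcode p' -> p = p'.
Proof.
  revert p'. induction p; destruct p'; cbn [pcode]; intros H; split_codes H; f_equal; auto.
Qed.

Lemma tcode_inj a a' : tcode a = tcode a' -> a = a'.
Proof.
  revert a'. induction a; destruct a'; cbn [tcode]; intros H; split_codes H;
    f_equal; auto using pcode_inj.
Qed.

Definition extend (X : tform -> Prop) (a : tform) (x : tform) : Prop :=
  X x \/ (consistent (fun y => y = a \/ X y) /\ x = a)
      \/ (~ consistent (fun y => y = a \/ X y) /\ x = TNeg a).

Lemma extend_consistent X a : consistent X -> consistent (extend X a).
Proof.
  intros HX. destruct (classic (consistent (fun y => y = a \/ X y))) as [Ha|Ha].
  - refine (consistent_mono _ _ _ Ha).
    intros x [Hx|[[_ ->]|[Hna _]]]; auto; contradiction.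
  - destruct (consistent_add_or_add_neg X a HX) as [|Hna]; [contradiction|].
    refine (consistent_mono _ _ _ Hna).
    intros x [Hx|[[Ha' _]|[_ ->]]]; auto; contradiction.
Qed.

(* Stage [n+1] decides the formula of code [n] (unique by [tcode_inj]), if any. *)
Fixpoint chain (X : tform -> Prop) (n : nat) : tform -> Prop :=
  match n with
  | 0 => X
  | S n => fun x => chain X n x \/ exists a, tcode a = n /\ extend (chain X n) a x
  end.

Lemma chain_mono X m n x : m <= n -> chain X m x -> chain X n x.
Proof. induction 1; simpl; auto. Qed.

Lemma chain_consistent X n : consistent X -> consistent (chain X n).
Proof.
  intros HX. induction n as [|n IH]; auto.
  destruct (classic (exists a, tcode a = n)) as [[a Ha]|Hn].
  - apply (consistent_mono _ (extend (chain X n) a)); auto using extend_consistent.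
    intros x [Hx|(a' & Ha' & Hx)]; [now left|].
    rewrite <- Ha in Ha'. now apply tcode_inj in Ha' as ->.
  - apply (consistent_mono _ (chain X n)); auto.
    intros x [Hx|(a & Ha & _)]; [auto|exfalso; eauto].
Qed.

Lemma lindenbaum X : consistent X -> exists D, MCS D /\ forall x, X x -> D x.
Proof.
  intros HX. exists (fun x => exists n, chain X n x). split; [split|].
  - intros [l [Hl Hbot]].
    assert (HN : exists N, forall b, In b l -> chain X N b).
    { clear Hbot. induction l as [|b l IH]; [exists 0; intros ? []|].
      destruct IH as [N HN]; [intros; apply Hl; now right|].
      destruct (Hl b (or_introl eq_refl)) as [m Hm].
      exists (max N m). intros c [<-|Hc].
      + apply (chain_mono X m); auto; lia.
      + apply (chain_mono X N); auto; lia. }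
    destruct HN as [N HN]. apply (chain_consistent X N HX). now exists l.
  - intros a. destruct (classic (consistent (fun y => y = a \/ chain X (tcode a) y))).
    + left. exists (S (tcode a)). right. exists a. unfold extend. tauto.
    + right. exists (S (tcode a)). right. exists a. unfold extend. tauto.
  - intros x Hx. now exists 0.
Qed.

Section MaximalConsistent.

Variable D : tform -> Prop.
Hypothesis HD : MCS D.

Lemma mcs_closed a : derives D a -> D a.
Proof.
  intros [l [Hl Ha]]. destruct (proj2 HD a) as [|Hna]; auto.
  exfalso. apply (proj1 HD). exists (TNeg a :: l). split.
  - intros b [<-|Hb]; auto.
  - apply (thm_taut_consequence [imps l a]); [intros t [<-|[]]; auto|].
    intros v w Ht. specialize (Ht _ (or_introl eq_refl)). rewrite teval_imps in Ht.
    apply teval_imps. intros Hall.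
    pose proof (Hall _ (or_introl eq_refl)) as Hneg. simpl in Hneg.
    rewrite Ht in Hneg; [discriminate|]. intros x Hx. apply Hall. now right.
Qed.

Lemma mcs_taut ks a : (forall b, In b ks -> D b) -> tautology (imps ks a) -> D a.
Proof. intros Hks Ha. apply mcs_closed. exists ks. auto using ax_taut. Qed.

Lemma mcs_thm a : thm a -> D a.
Proof. intros Ha. apply mcs_closed. exists []. split; [intros ? []|auto]. Qed.

Lemma mcs_not_both a : D a -> D (TNeg a) -> False.
Proof.
  intros Ha Hna. apply (proj1 HD). exists [a; TNeg a].
  split; [intros b [<-|[<-|[]]]; auto|]. apply ax_taut. tautology_by_cases.
Qed.

Lemma mcs_tbigand_mp ks a : (forall b, In b ks -> D b) -> thm (TImp (tbigand ks) a) -> D a.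
Proof.
  intros Hks Ht. apply (mcs_taut (TImp (tbigand ks) a :: ks)).
  - intros b [<-|Hb]; auto using mcs_thm.
  - intros v w. apply teval_imps. intros Hall.
    assert (Hconj : teval v w (tbigand ks) = true).
    { apply teval_tbigand. intros x Hx. apply Hall. now right. }
    specialize (Hall _ (or_introl eq_refl)). simpl in Hall. now rewrite Hconj in Hall.
Qed.

Lemma mcs_rck p l c :
  (forall r, In r l -> D (TCond p r)) -> thm (TProp (PImp (pbigand l) c)) -> D (TCond p c).
Proof.
  intros Hl Hc. apply (mcs_tbigand_mp (map (fun r => TCond p r) l)).
  - intros x Hx. apply in_map_iff in Hx as [r [<- Hr]]. auto.
  - now apply rule_rck.
Qed.

Lemma mcs_lle a b r :
  D (TCond (PNeg (PIff a b)) PBot) -> D (TCond a r) -> D (TCond b r).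
Proof.
  intros Hab Har. apply (mcs_taut [TCond (PNeg (PIff a b)) PBot; TCond a r;
    TImp (TCond (PNeg (PIff a b)) PBot) (TIff (TCond a r) (TCond b r))]).
  - intros x [<-|[<-|[<-|[]]]]; auto using mcs_thm, ax_lle.
  - tautology_by_cases.
Qed.

End MaximalConsistent.

Definition cond_lits (G : tform -> Prop) (b : tform) : Prop :=
  exists l, G (lit_form l) /\ b = lit_form l.

Lemma same_cond_lits G W :
  MCS G -> MCS W -> same_cond G W <-> forall b, cond_lits G b -> W b.
Proof.
  intros HG HW. split.
  - intros Hs b [[[[] p] q] [Hb ->]]; simpl in *; [now apply Hs|].
    destruct (proj2 HW (TCond p q)) as [Hpq|]; auto.
    exfalso. apply (mcs_not_both G HG (TCond p q)); auto. now apply Hs.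
  - intros Hl p q. split; intros Hpq.
    + apply Hl. now exists (true, p, q).
    + destruct (proj2 HG (TCond p q)) as [|Hnpq]; auto.
      exfalso. apply (mcs_not_both W HW (TCond p q)); auto.
      apply Hl. now exists (false, p, q).
Qed.

Lemma class_necessity G chi :
  MCS G -> (forall W, MCS W -> same_cond G W -> W (TProp chi)) ->
  G (TCond (PNeg chi) PBot).
Proof.
  intros HG Hall.
  assert (Hinc : ~ consistent (fun b => b = TNeg (TProp chi) \/ cond_lits G b)).
  { intros Hc. destruct (lindenbaum _ Hc) as [W [HW HXW]].
    apply (mcs_not_both W HW (TProp chi)); auto.
    apply Hall; auto. apply same_cond_lits; auto. }
  apply NNPP, deduction in Hinc.
  destruct (derives_image lit_form (fun l => G (lit_form l)) (fun _ => False) _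
              (derives_mono _ _ _ (fun b Hb => or_intror Hb) Hinc))
    as (ls & Hls & [[|b l] [Hl Hthm]]); [|destruct (Hl b (or_introl eq_refl))].
  apply (mcs_tbigand_mp G HG (map lit_form ls)).
  - intros b Hb. apply in_map_iff in Hb as [x [<- Hx]]. auto.
  - apply rule_s5f, (thm_taut_consequence [imps (map lit_form ls) (TImp (TNeg (TProp chi)) TBot)]);
      [intros t [<-|[]]; auto|].
    intros v w Ht. specialize (Ht _ (or_introl eq_refl)). rewrite teval_imps in Ht.
    simpl. destruct (teval v w (tbigand (map lit_form ls))) eqn:Els; [|reflexivity].
    rewrite teval_tbigand in Els. specialize (Ht Els). simpl in Ht.
    now destruct (peval v chi).
Qed.

Lemma likely_mem_of_cond G D d p q :
  MCS G -> MCS D -> G (TCond d q) -> likely G p D -> D (TProp d) ->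
  (forall W, MCS W -> same_cond G W -> W (TProp d) -> W (TProp p)) ->
  D (TProp q).
Proof.
  intros HG HD Hdq Hlik Hd Hall.
  assert (Hnec : G (TCond (PNeg (PIff d (PAnd p d))) PBot)).
  { apply class_necessity; auto. intros W HW HWs.
    destruct (proj2 HW (TProp d)) as [HWd|HWnd].
    - apply (mcs_taut W HW [TProp p]); [intros b [<-|[]]; now apply Hall|tautology_by_cases].
    - apply (mcs_taut W HW [TNeg (TProp d)]); [intros b [<-|[]]; auto|tautology_by_cases]. }
  assert (Hpq : G (TCond p (PImp d q))).
  { apply (mcs_taut G HG [TCond (PAnd p d) q; TImp (TCond (PAnd p d) q) (TCond p (PImp d q))]).
    - intros b [<-|[<-|[]]]; [exact (mcs_lle G HG _ _ _ Hnec Hdq)|apply mcs_thm, ax_exp; auto].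
    - tautology_by_cases. }
  apply (mcs_taut D HD [TProp (PImp d q); TProp d]).
  - intros b [<-|[<-|[]]]; auto.
  - tautology_by_cases.
Qed.

Lemma cond_of_likely_mem G d q :
  MCS G ->
  (forall W, MCS W -> same_cond G W -> likely G d W -> W (TProp d) -> W (TProp q)) ->
  G (TCond d q).
Proof.
  intros HG Hall.
  set (X := fun b => (b = TProp d \/ b = TNeg (TProp q) \/ cond_lits G b)
                     \/ exists r, G (TCond d r) /\ b = TProp r).
  assert (Hinc : ~ consistent X).
  { intros Hc. destruct (lindenbaum X Hc) as [W [HW HXW]].
    apply (mcs_not_both W HW (TProp q)); [|apply HXW; unfold X; tauto].
    apply Hall; auto.
    - apply same_cond_lits; auto. intros b Hb. apply HXW. unfold X. tauto.
    - intros r Hr. apply HXW. right. eauto.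
    - apply HXW. unfold X. tauto. }
  apply NNPP in Hinc.
  destruct (derives_image TProp (fun r => G (TCond d r)) _ _ Hinc) as (R & HR & HRbot).
  set (chi := PImp (pbigand R) (PImp d q)).
  assert (Hchi : forall W, MCS W -> same_cond G W -> W (TProp chi)).
  { intros W HW HWs.
    assert (Hded : W (TImp (TNeg (TProp q)) (TImp (TProp d) (imps (map TProp R) TBot)))).
    { apply mcs_closed, deduction, deduction; auto.
      refine (derives_mono _ _ _ _ HRbot). intros b [->|[->|Hb]]; auto.
      right; right. now apply (same_cond_lits G W). }
    apply (mcs_taut W HW [TImp (TNeg (TProp q)) (TImp (TProp d) (imps (map TProp R) TBot))]);
      [intros b [<-|[]]; exact Hded|].
    intros v w. simpl.
    destruct (teval v w (imps (map TProp R) TBot)) eqn:Ebot, (peval v (pbigand R)) eqn:ER,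
      (peval v d), (peval v q); try reflexivity.
    rewrite teval_imps in Ebot. apply Ebot. intros x Hx.
    apply in_map_iff in Hx as [r [<- Hr]]. simpl. now apply (peval_pbigand v R). }
  assert (Hnec : G (TCond (PNeg (PIff (PAnd d chi) d)) PBot)).
  { apply class_necessity; auto. intros W HW HWs.
    apply (mcs_taut W HW [TProp chi]); [intros b [<-|[]]; now apply Hchi|tautology_by_cases]. }
  assert (Hdchi : G (TCond d chi)).
  { apply (mcs_lle G HG _ _ _ Hnec), (mcs_rck G HG _ [PAnd d chi]).
    - intros r [<-|[]]. apply mcs_thm, ax_id; auto.
    - apply ax_taut. tautology_by_cases. }
  apply (mcs_rck G HG d (chi :: d :: R)).
  - intros r [<-|[<-|Hr]]; [exact Hdchi|exact (mcs_thm G HG _ (ax_id d))|exact (HR r Hr)].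
  - apply ax_taut. intros v w. cbn [teval peval].
    destruct (peval v (pbigand (chi :: d :: R))) eqn:E; [|reflexivity].
    rewrite peval_pbigand in E.
    assert (Hc := E chi (or_introl eq_refl)).
    assert (Hd := E d (or_intror (or_introl eq_refl))).
    assert (HRv : peval v (pbigand R) = true)
      by (apply peval_pbigand; intros x Hx; apply E; now right; right).
    unfold chi in Hc. simpl in Hc. now rewrite HRv, Hd in Hc.
Qed.

Definition next_idx (i : idx3) : idx3 :=
  match i with I0 => I1 | I1 => I2 | I2 => I0 end.

Lemma in_max_box G d D p i :
  in_max G (in_box G d) (D, p, i) ->
  likely G p D /\ forall W, MCS W -> same_cond G W -> W (TProp d) -> W (TProp p).
Proof.
  intros [HDbox Hmax].
  assert (Hdom : forall W, in_box G d (W, p, next_idx i) -> likely G p D /\ W (TProp p)).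
  { intros W HW. destruct (Hmax _ HW) as [|Hidx]; auto.
    - right. destruct i; simpl; auto.
    - destruct i; simpl in Hidx; intuition discriminate. }
  split.
  - exact (proj1 (Hdom D HDbox)).
  - intros W HW HWs HWd. now apply (Hdom W).
Qed.

Lemma likely_in_max_box G d D i :
  MCS D -> same_cond G D -> likely G d D -> D (TProp d) ->
  in_max G (in_box G d) (D, d, i).
Proof.
  intros HD HDs Hlik Hd. split; [exact (conj (conj HD HDs) Hd)|].
  intros [[W p] j] [_ HWd] _. now left.
Qed.

Theorem corollary2 (G : tform -> Prop) (d q : pform) :
  MCS G ->
  (G (TCond d q) <->
   forall (D : tform -> Prop) (p : pform) (i : idx3),
     in_max G (in_box G d) (D, p, i) -> D (TProp q)).
Proof.
  intros HG. split.
  - intros Hdq D p i Hmax.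
    destruct (in_max_box G d D p i Hmax) as [Hlik Hall].
    destruct Hmax as [[[HD _] Hd] _].
    exact (likely_mem_of_cond G D d p q HG HD Hdq Hlik Hd Hall).
  - intros Hmax. apply cond_of_likely_mem; auto.
    intros W HW HWs Hlik HWd. apply (Hmax W d I0).
    now apply likely_in_max_box.
Qed.
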